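(* Let $n=2m+2$ with $m\ge0$, let $a,b,c,d\in\mathbb{C}$, and suppose $T_n$ (degree $n$) and $U_{n-2}$ (degree at most $n-2$) satisfy $T_n^2-HU_{n-2}^2=1$ with $$T_n(z)=1-\frac{2(z-c)(z-d)\prod_{j=1}^m(z-x_j)^2}{(a-c)(a-d)\prod_{j=1}^m(a-x_j)^2}=-1+\frac{2(z-a)(z-b)\prod_{j=1}^m(z-y_j)^2}{(c-a)(c-b)\prod_{j=1}^m(c-y_j)^2}$$ for some $x_1,\dots,x_m,y_1,\dots,y_m\in\mathbb{C}$. Put $s_k:=\tfrac12\bigl(a^k-b^k+c^k+d^k\bigr)$, $k=1,\dots,2m+1$, and form $F_k,\mathbf F,\mathbf F_i$ with $\nu=m+1$, $\mu=m$. Then $\det\mathbf F\ne0$ and $x_1,\dots,x_m$ (with multiplicity) are exactly the zeros of $$x^{m}\det\mathbf F+x^{m-1}\det\mathbf F_1+\dots+x\det\mathbf F_{m-1}+\det\mathbf F_m.$$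
   Context: $H(z)=(z-a)(z-b)(z-c)(z-d)$. Given complex numbers $s_1,s_2,\dots$: $F_0:=1$, $F_k:=0$ for $k<0$, and for $k\ge1$, $F_k:=\frac{(-1)^k}{k!}\det M_k$ where $M_k$ is the $k\times k$ matrix with entry $s_{i-j+1}$ for $j\le i$, entry $i$ at position $(i,i+1)$, and $0$ elsewhere. For integers $\nu\ge0,\mu\ge0$, $\mathbf F$ is the $\mu\times\mu$ matrix with $(i,j)$ entry $F_{\nu+i-j}$, and $\mathbf F_i$ ($1\le i\le\mu$) is $\mathbf F$ with its $i$-th column replaced by $(-F_{\nu+1},\dots,-F_{\nu+\mu})^T$. Convention: if $\mu=0$, $\det\mathbf F:=1$. *)

From HB Require Import structures.
From mathcomp Require Import all_boot all_order all_algebra.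
Set Implicit Arguments. Unset Strict Implicit. Unset Printing Implicit Defensive.
Import Order.TTheory GRing.Theory Num.Theory.
Local Open Scope ring_scope.

Section Defs.
Variable C : numClosedFieldType.

Definition Hpoly (a b c d : C) : {poly C} :=
  ('X - a%:P) * ('X - b%:P) * ('X - c%:P) * ('X - d%:P).

(* M_k (1-indexed in the paper; here 0-indexed i j : 'I_k, paper row i+1, col j+1):
   entry s_{i-j+1} if j <= i, entry (i+1) at position (i+1, i+2), 0 elsewhere. *)
Definition Mmx (s : nat -> C) (k : nat) : 'M[C]_k :=
  \matrix_(i < k, j < k)
    if (j <= i)%N then s (i - j).+1
    else if j == i.+1 :> nat then (i.+1)%:R else 0.

Definition Fk (s : nat -> C) (k : int) : C :=
  match k with
  | Posz 0 => 1
  | Posz k' => (-1) ^+ k' / (k'`!)%:R * \det (Mmx s k')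
  | Negz _ => 0
  end.

Definition Fmx (s : nat -> C) (nu mu : nat) : 'M[C]_mu :=
  \matrix_(i < mu, j < mu) Fk s ((nu + i)%:Z - j%:Z).

(* bold F_i : column i replaced by (-F_{nu+1}, ..., -F_{nu+mu})^T
   (here i : 'I_mu is 0-indexed, corresponding to the paper's i+1) *)
Definition Fimx (s : nat -> C) (nu mu : nat) (i : 'I_mu) : 'M[C]_mu :=
  \matrix_(r < mu, c < mu)
    if c == i then - Fk s (nu + r.+1)%:Z else Fk s ((nu + r)%:Z - c%:Z).

Definition sk (a b c d : C) (k : nat) : C :=
  (a ^+ k - b ^+ k + c ^+ k + d ^+ k) / 2.

End Defs.

From HB Require Import structures.
From mathcomp Require Import all_boot all_order all_algebra.
From mathcomp Require Import ring zify.
Set Implicit Arguments. Unset Strict Implicit. Unset Printing Implicit Defensive.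
Import Order.TTheory GRing.Theory Num.Theory.
Local Open Scope ring_scope.

(* Write lin t = 1 - tX, and P = prod_j lin x_j, Y = prod_j lin y_j for the
   reversals of prod_j (X - x_j) and prod_j (X - y_j); let K = 2m + 2.
   1. Reversing the two expressions of T at degree K gives the identity
        (1 - aX)(1 - bX) Y^2 - (1 - cX)(1 - dX) P^2 = g X^K  with g != 0.
   2. Expanding det M_(k+1) along its last column gives Newton's identity
        (k+1) F_(k+1) = - sum_(i <= k) s_(i+1) F_(k-i),
      i.e. Phi = sum_k F_k X^k has logarithmic derivative -sum_k s_k X^k.
      For s_k = (a^k - b^k + c^k + d^k)/2, both Phi^2 (1 - bX) and
      (1 - aX)(1 - cX)(1 - dX) solve the same first order equation, hence agree
      modulo X^K.
   3. With 1 this yields P Phi = (1 - aX) Y mod X^K; as deg ((1 - aX) Y) <= m + 1,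
      the coefficients P_1, ..., P_m solve the linear system of matrix bold F
      and right-hand side -(F_(m+2), ..., F_(2m+1)).
   4. bold F is invertible: a kernel vector would give a second Pade-type
      approximant of Phi, which the identity of 1 rules out.
   5. By Cramer's rule det bold F_i = det bold F * P_i, and P_0 = 1, P_1, ...,
      P_m are the coefficients of prod_j (X - x_j) read backwards. *)

Section TruncatedCongruence.
Variable R : fieldType.
Implicit Types (p q r w : {poly R}) (K : nat).

(* [congX K p q]: p = q modulo X^K, i.e. p and q have the same first K
   coefficients; this is equality of truncated power series. *)
Definition congX K p q := 'X^K %| p - q.

Lemma congXP K p q : reflect (forall i, (i < K)%N -> p`_i = q`_i) (congX K p q).
Proof.
rewrite /congX /dvdp -Pdiv.IdomainMonic.take_poly_modp.
apply: (iffP eqP) => [h i hi | h].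
  by apply/eqP; rewrite -subr_eq0 -coefB; have := coef_take_poly K (p - q) i;
  rewrite hi h coef0 => <-.
apply/polyP => i; rewrite coef_take_poly coefB coef0.
by case: ifP => // /h ->; rewrite subrr.
Qed.

Lemma congX_sym K p q : congX K p q -> congX K q p.
Proof. by rewrite /congX => h; rewrite -opprB dvdpNr. Qed.

Lemma congX_trans K p q r : congX K p q -> congX K q r -> congX K p r.
Proof.
rewrite /congX => hpq hqr.
have -> : p - r = (p - q) + (q - r) by rewrite addrA subrK.
exact: dvdp_add.
Qed.

Lemma congXD K p q p' q' : congX K p q -> congX K p' q' -> congX K (p + p') (q + q').
Proof. by rewrite /congX opprD addrACA; apply: dvdp_add. Qed.

Lemma congXN K p q : congX K p q -> congX K (- p) (- q).
Proof. by rewrite /congX => h; rewrite -opprD dvdpNr. Qed.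

Lemma congXMl K p q r : congX K p q -> congX K (r * p) (r * q).
Proof. by rewrite /congX -mulrBr; apply: dvdp_mull. Qed.

Lemma congXMr K p q r : congX K p q -> congX K (p * r) (q * r).
Proof. by rewrite ![_ * r]mulrC; apply: congXMl. Qed.

Lemma congX_le K K' p q : (K' <= K)%N -> congX K p q -> congX K' p q.
Proof. by move=> hK; apply: dvdp_trans; rewrite dvdp_exp2l. Qed.

Lemma congX_eq K p q : (size (p - q)%R <= K)%N -> congX K p q -> p = q.
Proof.
move=> hs hpq; apply/eqP; rewrite -subr_eq0; apply: contraTT hs => hnz.
by rewrite -ltnNge (leq_trans _ (dvdp_leq hnz hpq)) // size_polyXn.
Qed.

Lemma coprimep_Xn w K : w`_0 != 0 -> coprimep w 'X^K.
Proof.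
move=> hw; apply: coprimep_expr.
by have := coprimep_XsubC w 0; rewrite subr0 /root horner_coef0 hw => ->.
Qed.

Lemma congX_cancel K p q w : w`_0 != 0 -> congX K (p * w) (q * w) -> congX K p q.
Proof.
by move=> hw; rewrite /congX -mulrBl Gauss_dvdpl // coprimep_sym coprimep_Xn.
Qed.

End TruncatedCongruence.

Lemma coefM_small (R : nzSemiRingType) (p q : {poly R}) n i :
  (size p <= n)%N -> (n <= i.+1)%N -> (p * q)`_i = \sum_(j < n) p`_j * q`_(i - j).
Proof.
move=> hp hi; rewrite coefM [RHS](big_ord_widen _ (fun j => p`_j * q`_(i - j)) hi).
rewrite [RHS]big_mkcond /=; apply: eq_bigr => j _; case: ltnP => // hj.
by rewrite nth_default ?mul0r // (leq_trans hp).
Qed.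

Lemma cramer (R : comNzRingType) n (A : 'M[R]_n) (q r : 'I_n -> R) (i : 'I_n) :
  (forall k, \sum_j A k j * q j = r k) ->
  \det (\matrix_(k, j) if j == i then r k else A k j) = \det A * q i.
Proof.
move=> hA; set E : 'M[R]_n := \matrix_(k, j) if j == i then q k else (k == j)%:R.
have -> : (\matrix_(k, j) if j == i then r k else A k j) = A *m E.
  apply/matrixP => k j; rewrite !mxE; under eq_bigr do rewrite mxE.
  case: eqP => hj; first by rewrite -hA.
  rewrite (bigD1 j) //= eqxx mulr1 big1 ?addr0 // => l hl.
  by rewrite (negbTE hl) mulr0.
rewrite det_mulmx; congr (_ * _).
rewrite (expand_det_row _ i) (bigD1 i) //= big1 ?addr0 => [|j hj]; last first.
  by rewrite mxE (negbTE hj) eq_sym (negbTE hj) mul0r.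
rewrite /cofactor; have -> : row' i (col' i E) = 1%:M.
  apply/matrixP => k j; rewrite !mxE (inj_eq (@lift_inj _ i)).
  by rewrite eq_sym (negbTE (neq_lift i j)).
by rewrite mxE eqxx det1 -signr_odd oddD addbb expr0 !mulr1.
Qed.

Section LogarithmicDerivative.
Variable R : numFieldType.
Implicit Types (p q L M Y Z : {poly R}) (K : nat).

Definition theta p := 'X * p^`().

Lemma coef_theta p i : (theta p)`_i = p`_i *+ i.
Proof. by rewrite /theta coefXM; case: i => [|i] //=; rewrite coef_deriv. Qed.

Lemma thetaB p q : theta (p - q) = theta p - theta q.
Proof. by rewrite /theta derivB mulrBr. Qed.

Lemma thetaM p q : theta (p * q) = theta p * q + p * theta q.
Proof. by rewrite /theta derivM mulrDr mulrA mulrCA. Qed.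

(* [logder K L Y]: modulo X^K, Y solves theta Y = - L Y; for Y(0) = 1 this says
   that -L is the logarithmic derivative X Y'/Y of the power series Y. *)
Definition logder K L Y := congX K (theta Y) (- (L * Y)).

Lemma logderM K L M Y Z : logder K L Y -> logder K M Z -> logder K (L + M) (Y * Z).
Proof.
move=> hY hZ; rewrite /logder thetaM.
have -> : - ((L + M) * (Y * Z)) = - (L * Y) * Z + Y * - (M * Z) by ring.
by apply: congXD; [apply: congXMr | apply: congXMl].
Qed.

Lemma logder_uniq K L Y Z :
  L`_0 = 0 -> Y`_0 = Z`_0 -> logder K L Y -> logder K L Z -> congX K Y Z.
Proof.
move=> hL hYZ hY hZ; set D := Y - Z.
have /congXP hD : logder K L D.
  rewrite /logder /D thetaB (_ : - (L * (Y - Z)) = - (L * Y) - - (L * Z)); last by ring.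
  exact: congXD hY (congXN hZ).
suff hD0 i : (i < K)%N -> D`_i = 0.
  by apply/congXP => i /hD0 /eqP; rewrite coefB subr_eq0 => /eqP.
elim: i {-2}i (leqnn i) => [|n IH] i hin hi.
  by move: hin; rewrite leqn0 => /eqP ->; rewrite coefB hYZ subrr.
case: (ltnP i n.+1) => [hin'|hni]; first exact: IH hin' hi.
have ei : i = n.+1 by apply/eqP; rewrite eqn_leq hin hni.
subst i; move: (hD n.+1 hi); rewrite coef_theta coefN coefM big_ord_recl hL mul0r add0r.
rewrite big1 ?oppr0 => [/eqP|j _]; first by rewrite mulrn_eq0 => /eqP.
by rewrite IH ?mulr0 //= subSS ?leq_subr // (leq_ltn_trans (leq_subr _ _) (ltnW hi)).
Qed.

(* [lin t] = 1 - tX is the reversal of the linear factor X - t. *)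
Definition lin (t : R) : {poly R} := 1 - t%:P * 'X.

Lemma lin0 t : (lin t)`_0 = 1.
Proof. by rewrite /lin coefB coef1 coefCM coefX mulr0 subr0. Qed.

Lemma size_lin t : (size (lin t) <= 2)%N.
Proof.
rewrite /lin (leq_trans (size_polyD _ _)) // size_polyN geq_max size_poly1.
by rewrite (leq_trans (size_mul_leq _ _)) // size_polyX size_polyC; case: (t != 0).
Qed.

Definition powsum K (t : R) : {poly R} := \poly_(i < K) (if i == 0%N then 0 else t ^+ i).

Lemma powsum0 K t : (powsum K t)`_0 = 0.
Proof. by rewrite coef_poly; case: ifP. Qed.

(* Since X (1 - tX)' = -tX = -(powsum t) (1 - tX) mod X^K,
   the logarithmic derivative of 1 - tX is -(powsum t). *)
Lemma logder_lin K t : logder K (powsum K t) (lin t).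
Proof.
rewrite /logder; have -> : theta (lin t) = - (t%:P * 'X).
  by rewrite /theta /lin derivB derivC deriv_mulC derivX sub0r mulr1 mulrN mulrC.
apply/congXN/congX_sym/congXP => i hi.
rewrite /lin mulrBr mulr1 coefB coefCM coefX mulrA coefMX coefMC !coef_poly hi.
case: i hi => [|[|i]] hi /=; first by rewrite subr0 mulr0.
  by rewrite mulr1 expr1 (ltnW hi) mul0r subr0.
by rewrite (ltnW hi) exprS mulrC subrr mulr0.
Qed.

End LogarithmicDerivative.

Section Reversal.
Variable R : numFieldType.
Implicit Types (p q : {poly R}) (t w : R).

Lemma poly_eq_nz p q : (forall w, w != 0 -> p.[w] = q.[w]) -> p = q.
Proof.
move=> h; apply/eqP; rewrite -subr_eq0; apply/eqP.
apply: (@roots_geq_poly_eq0 _ _ [seq i.+1%:R | i <- iota 0 (size (p - q))]).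
- apply/allP => z /mapP [i _ ->].
  by rewrite /root hornerD hornerN h ?subrr // pnatr_eq0.
- by rewrite map_inj_uniq ?iota_uniq // => i j /eqP; rewrite eqr_nat eqSS => /eqP.
- by rewrite size_map size_iota.
Qed.

Lemma horner_rev n p w : (size p <= n.+1)%N -> w != 0 ->
  (\sum_(i < n.+1) (p`_i)%:P * 'X^(n - i)).[w] = w ^+ n * p.[w^-1].
Proof.
move=> hp hw; rewrite horner_sum (horner_coef_wide _ hp) mulr_sumr.
apply: eq_bigr => i _; have hi : (i <= n)%N by rewrite -ltnS.
have -> : w ^+ n = w ^+ (n - i) * w ^+ i by rewrite -exprD subnK.
rewrite hornerM hornerC hornerXn exprVn.
by field; rewrite expf_neq0.
Qed.

Lemma horner_lin t w : w != 0 -> (lin t).[w] = w * (w^-1 - t).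
Proof.
by move=> hw; rewrite /lin hornerD hornerN hornerM hornerX !hornerC; field.
Qed.

Section ProductOfLinearFactors.
Variables (m : nat) (x : 'I_m -> R).

Definition prod_lin : {poly R} := \prod_(j < m) lin (x j).

Lemma prod_lin0 : prod_lin`_0 = 1.
Proof.
by rewrite -horner_coef0 horner_prod big1 // => j _; rewrite horner_coef0 lin0.
Qed.

Lemma size_prod_lin : (size prod_lin <= m.+1)%N.
Proof.
rewrite /prod_lin; elim: m x => [|n IH] y; first by rewrite big_ord0 size_poly1.
rewrite big_ord_recr /= (leq_trans (size_mul_leq _ _)) //.
have := IH (fun j => y (widen_ord (leqnSn n) j)); have := size_lin (y ord_max).
by set u := size (lin _); set v := size (\prod_(j < n) _ : {poly R}); lia.
Qed.

Lemma size_lin_prod_lin t : (size (lin t * prod_lin)%R <= m.+2)%N.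
Proof.
rewrite (leq_trans (size_mul_leq _ _)) //.
by have := size_lin t; have := size_prod_lin; set u := size prod_lin; lia.
Qed.

Lemma horner_prod_lin w : w != 0 ->
  prod_lin.[w] = w ^+ m * (\prod_(j < m) ('X - (x j)%:P)).[w^-1].
Proof.
move=> hw; rewrite !horner_prod (eq_bigr _ (fun j _ => horner_lin (x j) hw)).
by rewrite prodrMl card_ord; under [in RHS]eq_bigr do rewrite hornerXsubC.
Qed.

Lemma prod_XsubC_rev :
  \prod_(j < m) ('X - (x j)%:P) = \sum_(i < m.+1) (prod_lin`_i)%:P * 'X^(m - i).
Proof.
apply: poly_eq_nz => w hw; rewrite horner_rev ?size_prod_lin //.
by rewrite horner_prod_lin ?invr_eq0 // invrK mulrA -exprMn mulfV // expr1n mul1r.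
Qed.

End ProductOfLinearFactors.

(* Reversing the hypothesis  1 - al (X-c)(X-d) prod (X-x_j)^2
   = -1 + be (X-a)(X-b) prod (X-y_j)^2  at degree 2m+2: comparing constant terms
   forces al = -be, and the reversed polynomials differ by a multiple of X^(2m+2). *)
Lemma reversed_identity m (x y : 'I_m -> R) a b c d al be :
  be != 0 ->
  1 - al *: (('X - c%:P) * ('X - d%:P) * \prod_(j < m) ('X - (x j)%:P) ^+ 2) =
  -1 + be *: (('X - a%:P) * ('X - b%:P) * \prod_(j < m) ('X - (y j)%:P) ^+ 2) ->
  lin a * lin b * prod_lin y ^+ 2 - lin c * lin d * prod_lin x ^+ 2 =
  (2 / be) *: 'X^(2 * m + 2).
Proof.
move=> hbe hT; set K := (2 * m + 2)%N.
have hK : K = (m + m).+2 by rewrite /K addn2 mul2n addnn.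
set A := lin a * lin b * prod_lin y ^+ 2; set B := lin c * lin d * prod_lin x ^+ 2.
have hrev : be *: A + al *: B = 2%:P * 'X^K.
  apply: poly_eq_nz => w hw; move: hT; rewrite !prodrXl => /(congr1 (horner^~ w^-1)).
  rewrite /A /B /= !(horner_exp, hornerXsubC, hornerD, hornerN, hornerZ, hornerM, hornerC).
  rewrite hornerX !horner_prod_lin //.
  set PX := _.[w^-1]; set PY := _.[w^-1] => h.
  transitivity (w ^+ K * (be * ((w^-1 - a) * (w^-1 - b) * PY ^+ 2)
                          + al * ((w^-1 - c) * (w^-1 - d) * PX ^+ 2))).
    by rewrite hK !exprS !exprD; field.
  rewrite [X in _ * X = _](_ : _ = (-1 + be * ((w^-1 - a) * (w^-1 - b) * PY ^+ 2))
                          - (1 - al * ((w^-1 - c) * (w^-1 - d) * PX ^+ 2)) + 2).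
    by rewrite -h subrr add0r mulrC.
  by ring.
have hal : al = - be.
  move/(congr1 (fun p => p`_0)): hrev; rewrite /A /B !expr2.
  rewrite coefD !coefZ !coef0M !lin0 !prod_lin0 coefC coefXn hK !mulr1 mulr0 => /eqP.
  by rewrite addrC addr_eq0 => /eqP.
apply: (scalerI hbe); rewrite scalerBr -scaleNr -hal hrev scalerA mulrCA mulfV //.
by rewrite mulr1 mul_polyC.
Qed.
End Reversal.

Section NewtonIdentity.
Variable C : numClosedFieldType.
Implicit Types (s u : nat -> C) (k : nat).

Definition fn s k : C := (-1) ^+ k / (k`!)%:R * \det (Mmx s k).

Lemma Fk_fn s k : Fk s k%:Z = fn s k.
Proof. by case: k => [|k] //=; rewrite /fn det_mx00 expr0 invr1 !mulr1. Qed.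

Lemma fn0 s : fn s 0 = 1.
Proof. by rewrite -Fk_fn. Qed.

Lemma sign_sq k : (-1) ^+ k * (-1) ^+ k = 1 :> C.
Proof. by rewrite -exprMn mulrNN mulr1 expr1n. Qed.

Lemma det_Mmx s k : \det (Mmx s k) = (-1) ^+ k * (k`!)%:R * fn s k.
Proof.
have hk : (k`!)%:R != 0 :> C by rewrite pnatr_eq0 -lt0n fact_gt0.
transitivity (((-1) ^+ k * (-1) ^+ k) * ((k`!)%:R / (k`!)%:R) * \det (Mmx s k)).
  by rewrite sign_sq mulfV // !mul1r.
by rewrite /fn; ring.
Qed.

Definition Mmx_last s u k : 'M[C]_k :=
  \matrix_(i < k, j < k)
    if (j <= i)%N then (if i.+1 == k then u else s) (i - j).+1
    else if j == i.+1 :> nat then (i.+1)%:R else 0.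

Lemma Mmx_lastss s k : Mmx_last s s k = Mmx s k.
Proof. by apply/matrixP => i j; rewrite !mxE if_same. Qed.

Lemma det_Mmx_last s k u :
  \det (Mmx_last s u k.+1) = (-1) ^+ k * (k`!)%:R * \sum_(i < k.+1) u i.+1 * fn s (k - i).
Proof.
elim: k u => [|k IH] u /=.
  by rewrite det_mx11 !mxE /= big_ord1 subnn fn0 expr0 !mul1r mulr1.
rewrite (expand_det_col _ ord_max) (bigD1 ord_max) //= (bigD1 (inord k)) /=; last first.
  by rewrite -(inj_eq val_inj) /= inordK // neq_ltn ltnSn.
rewrite big1 ?addr0 => [|i /andP[hi1 hi2]]; last first.
  have hik : (i < k)%N.
    have h1 : i != k.+1 :> nat by apply: contra_neq hi1 => h; apply: val_inj.
    have h2 : i != k :> nat by apply: contra_neq hi2 => h; apply: val_inj; rewrite /= inordK.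
    by have := ltn_ord i; lia.
  by rewrite !mxE leqNgt ltnS (ltnW hik) /= eqSS gtn_eqF // mul0r.
have minor_last : row' ord_max (col' ord_max (Mmx_last s u k.+2)) = Mmx s k.+1.
  apply/matrixP => i j; rewrite !mxE /= /bump !(leqNgt k.+1) !ltn_ord /=.
  by rewrite !add0n eqSS (ltn_eqF (ltn_ord i)).
have minor_pen : row' (inord k) (col' ord_max (Mmx_last s u k.+2)) =
                 Mmx_last s (fun n => u n.+1) k.+1.
  apply/matrixP => i j; rewrite !mxE /= /bump inordK // (leqNgt k.+1) ltn_ord /= add0n.
  case: (ltnP i k) => hik.
    by rewrite add0n !eqSS (ltn_eqF hik) (ltn_eqF (leq_trans hik (leqnSn _))).
  have -> : i = k :> nat by apply/eqP; rewrite eqn_leq hik -ltnS ltn_ord.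
  have hj : (j <= k)%N by rewrite -ltnS (ltn_ord j).
  by rewrite add1n eqxx (leqW hj) hj eqxx subSn.
rewrite /cofactor minor_last minor_pen IH det_Mmx !mxE /= inordK // leqnn eqxx ltnn /= eqxx.
rewrite subnn [in RHS]big_ord_recl /= subn0.
under [in RHS]eq_bigr do rewrite /bump /= add1n subSS.
rewrite (exprD _ k.+1) sign_sq (addnS k k) (exprS _ (k + k)) (exprD _ k) sign_sq mulr1.
by rewrite factS natrM exprS; ring.
Qed.

Lemma newton_fn s k : k.+1%:R * fn s k.+1 = - \sum_(i < k.+1) s i.+1 * fn s (k - i).
Proof.
have hk : (k`!)%:R != 0 :> C by rewrite pnatr_eq0 -lt0n fact_gt0.
have hk1 : k.+1%:R != 0 :> C by rewrite pnatr_eq0.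
rewrite {1}/fn -Mmx_lastss det_Mmx_last factS natrM exprS.
move: (\sum_(i < k.+1) _) => S; have := sign_sq k; move: ((-1) ^+ k) => e he.
rewrite [LHS](_ : _ = - (e * e) * S); first by rewrite he mulN1r.
by field; rewrite hk [1 + _]addrC natr1 hk1.
Qed.

End NewtonIdentity.

Section GeneratingFunction.
Variable C : numClosedFieldType.
Variable K : nat.
Implicit Types (s : nat -> C) (a b c d : C).

Definition Phi s : {poly C} := \poly_(i < K) fn s i.

Definition psum s : {poly C} := \poly_(i < K) (if i == 0%N then 0 else s i).

Lemma Phi0 s : (0 < K)%N -> (Phi s)`_0 = 1.
Proof. by move=> hK; rewrite coef_poly hK fn0. Qed.

(* Newton's identity says exactly that Phi has logarithmic derivative -psum. *)
Lemma logder_Phi s : logder K (psum s) (Phi s).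
Proof.
apply/congXP => i hi; rewrite coef_theta coefN coefM !coef_poly hi.
case: i hi => [|k] hi.
  by rewrite big_ord1 mulr0n coef_poly /= (leq_ltn_trans _ hi) // mul0r oppr0.
rewrite big_ord_recl coef_poly /= (leq_ltn_trans _ hi) // mul0r add0r -mulr_natl.
rewrite newton_fn; congr (- _); apply: eq_bigr => j _.
rewrite !coef_poly /bump /= add1n subSS.
have hj : (j.+1 < K)%N by rewrite (leq_ltn_trans _ hi) // ltnS -ltnS.
by rewrite hj (leq_ltn_trans (leq_subr _ _) (ltnW hi)).
Qed.

Lemma psum_sk a b c d :
  psum (sk a b c d) *+ 2 = powsum K a - powsum K b + powsum K c + powsum K d.
Proof.
apply/polyP => i; rewrite coefMn !coefD coefN !coef_poly.
case: (i < K)%N; last by rewrite mul0rn !subrr !addr0.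
case: (i == 0%N); first by rewrite mul0rn subrr !addr0.
by rewrite /sk; field.
Qed.

(* Comparing logarithmic derivatives: the generating series of the F_k is
   the square root of (1 - aX)(1 - cX)(1 - dX)/(1 - bX) modulo X^K. *)
Lemma Phi_sq a b c d :
  congX K (Phi (sk a b c d) ^+ 2 * lin b) (lin a * lin c * lin d).
Proof.
have [-> | hK] := posnP K; first by rewrite /congX expr0 dvd1p.
set F := Phi (sk a b c d); set L := powsum K a + powsum K c + powsum K d.
have hFb : logder K L (F ^+ 2 * lin b).
  have -> : L = psum (sk a b c d) *+ 2 + powsum K b by rewrite psum_sk /L; ring.
  rewrite mulr2n expr2; apply: logderM; last exact: logder_lin.
  by apply: logderM; apply: logder_Phi.
have hacd : logder K L (lin a * lin c * lin d).
  by apply: logderM; [apply: logderM|]; apply: logder_lin.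
apply: logder_uniq hFb hacd; first by rewrite !coefD !powsum0 !addr0.
by rewrite !coef0M Phi0 // !lin0 !mulr1.
Qed.

(* If (1 - aX)(1 - bX) Y^2 = (1 - cX)(1 - dX) P^2 mod X^K, then (1 - aX) Y / P
   and Phi are square roots of the same series; the normalization
   P(0) = Y(0) = 1 selects the same root, so P Phi = (1 - aX) Y mod X^K. *)
Lemma pade_congruence a b c d (P Y : {poly C}) :
  P`_0 = 1 -> Y`_0 = 1 ->
  congX K (lin a * lin b * Y ^+ 2) (lin c * lin d * P ^+ 2) ->
  congX K (P * Phi (sk a b c d)) (lin a * Y).
Proof.
move=> hP0 hY0 hPY; have [-> | hK] := posnP K; first by rewrite /congX expr0 dvd1p.
set F := Phi (sk a b c d); set U := P * F; set V := lin a * Y.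
have hUVb : congX K (U ^+ 2 * lin b) (V ^+ 2 * lin b).
  have -> : U ^+ 2 * lin b = P ^+ 2 * (F ^+ 2 * lin b) by rewrite /U; ring.
  have -> : V ^+ 2 * lin b = lin a * (lin a * lin b * Y ^+ 2) by rewrite /V; ring.
  apply: congX_trans (congXMl _ (Phi_sq a b c d)) _.
  have -> : P ^+ 2 * (lin a * lin c * lin d) = lin a * (lin c * lin d * P ^+ 2) by ring.
  exact/congXMl/congX_sym.
have hUV : congX K (U ^+ 2) (V ^+ 2) by apply: congX_cancel hUVb; rewrite lin0 oner_eq0.
have hUV0 : (U + V)`_0 != 0.
  by rewrite coefD !coef0M hP0 hY0 Phi0 // lin0 !mul1r -mulr2n mulrn_eq0 oner_eq0.
have : congX K ((U - V) * (U + V)) (0 * (U + V)).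
  have -> : (U - V) * (U + V) = U ^+ 2 - V ^+ 2 by ring.
  by rewrite mul0r /congX subr0.
by move/(congX_cancel hUV0); rewrite /congX subr0.
Qed.

End GeneratingFunction.

Section PadeUniqueness.
Variable R : fieldType.
Variables (m : nat) (F P Q B W : {poly R}) (g : R).
Hypotheses (hPF : congX (2 * m + 1) (P * F) Q) (hP0 : P`_0 != 0) (hg : g != 0).
Hypotheses (hPs : (size P <= m.+1)%N) (hQs : (size Q <= m.+2)%N).
Hypotheses (hBs : (size B <= m.+2)%N) (hWs : (size W <= 3)%N).
Hypothesis hid : Q * B - W * P ^+ 2 = g *: 'X^(2 * m + 2).

Lemma pade_cross (V : {poly R}) :
  (size V <= m)%N -> (forall r, (r < m)%N -> (V * F)`_(m.+1 + r) = 0) ->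
  V * Q = P * take_poly m.+1 (V * F).
Proof.
move=> hVs hVF; set A := take_poly m.+1 (V * F).
have hVA : congX (2 * m + 1) (V * F) A.
  apply/congXP => i hi; rewrite coef_take_poly; case: ltnP => // hmi.
  by rewrite -(subnKC hmi) hVF //; lia.
apply: (@congX_eq _ (2 * m + 1)).
  rewrite (leq_trans (size_polyD _ _)) // size_polyN geq_max.
  have := size_mul_leq V Q; have := size_mul_leq P A; have := size_take_poly m.+1 (V * F).
  by rewrite -/A; set u := size (V * Q); set v := size (P * A); lia.
apply: congX_trans (congXMl V (congX_sym hPF)) _.
by rewrite mulrCA; apply: congXMl.
Qed.

(* Multiplying the cross identity by the identity hid shows that P divides
   X^(2m+2) V; since P(0) != 0, P divides V. *)
Lemma pade_divides (V A : {poly R}) : V * Q = P * A -> P %| V.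
Proof.
move=> hVA; rewrite -(Gauss_dvdpr V (coprimep_Xn (2 * m + 2) hP0)).
suff -> : 'X^(2 * m + 2) * V = P * (g^-1 *: (B * A - W * P * V)) by apply: dvdp_mulIl.
apply: (scalerI hg); rewrite scalerAl -hid scalerAr scalerA mulfV // scale1r.
have -> : (Q * B - W * P ^+ 2) * V = B * (V * Q) - W * P ^+ 2 * V by ring.
by rewrite hVA; ring.
Qed.

(* The coefficient of X^(2m+2) in hid is g != 0, so P and Q cannot both
   have smaller than maximal degree. *)
Lemma pade_degree : size P = m.+1 \/ size Q = m.+2.
Proof.
case: (eqVneq (size P) m.+1) => [|hP]; [by left | right].
apply/eqP; apply: contraT => hQ; rewrite -(negbTE hg); apply/eqP.
have -> : g = (Q * B - W * P ^+ 2)`_(2 * m + 2) by rewrite hid coefZ coefXn eqxx mulr1.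
rewrite coefB !nth_default ?subrr //.
  have := size_mul_leq W (P ^+ 2); have := size_mul_leq P P; rewrite -expr2.
  by move: hP hPs; set u := size (W * _); set v := size (P ^+ 2); set w := size P; lia.
have := size_mul_leq Q B.
by move: hQ hQs; set u := size (Q * B); set v := size Q; lia.
Qed.

Lemma pade_kernel_trivial (V : {poly R}) :
  (size V <= m)%N -> (forall r, (r < m)%N -> (V * F)`_(m.+1 + r) = 0) -> V = 0.
Proof.
move=> hVs hVF; have hcross := pade_cross hVs hVF.
set A := take_poly m.+1 (V * F) in hcross.
have /dvdpP [D hD] := pade_divides hcross.
have hPnz : P != 0 by apply: contra hP0 => /eqP ->; rewrite coef0.
apply/eqP; apply: contraT => hV0.
have hDnz : D != 0 by apply: contra hV0; rewrite hD => /eqP ->; rewrite mul0r.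
have hA : A = D * Q by apply: (mulfI hPnz); rewrite -hcross hD; ring.
case: pade_degree => [hPm | hQm].
  have := size_poly_gt0 D; rewrite hDnz => hD0.
  by move: hVs; rewrite hD size_mul // hPm; set u := size D; lia.
have hQnz : Q != 0 by rewrite -size_poly_gt0 hQm.
have := size_take_poly m.+1 (V * F); rewrite -/A hA size_mul // hQm.
have := size_poly_gt0 D; rewrite hDnz => hD0.
by set u := size D; lia.
Qed.

End PadeUniqueness.

Section PadeSystem.
Variable C : numClosedFieldType.
Variables (m K : nat) (s : nat -> C).
Hypothesis hK : (2 * m + 2 <= K)%N.

Lemma Fmx_fn (r j : 'I_m) : Fmx s m.+1 m r j = fn s (m.+1 + r - j).
Proof.
by rewrite mxE subzn ?Fk_fn //; have := ltn_ord j; lia.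
Qed.

(* If P Phi = Q mod X^K with P(0) = 1, deg P <= m and deg Q <= m+1, the
   coefficients m+2, ..., 2m+1 of P Phi vanish: (P_1, ..., P_m) solves the
   linear system with matrix bold F and right-hand side -(F_(m+2), ..., F_(2m+1)). *)
Lemma pade_system (P Q : {poly C}) :
  P`_0 = 1 -> (size P <= m.+1)%N -> (size Q <= m.+2)%N ->
  congX K (P * Phi K s) Q ->
  forall r : 'I_m, \sum_(j < m) Fmx s m.+1 m r j * P`_j.+1 = - Fk s (m.+1 + r.+1)%:Z.
Proof.
move=> hP0 hPs hQs /congXP hPQ r; set n := (m.+1 + r.+1)%N.
have hn : (n < K)%N by rewrite /n; have := ltn_ord r; lia.
have := hPQ n hn; rewrite (coefM_small _ hPs) ?big_ord_recl; last by rewrite /n; lia.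
rewrite hP0 mul1r [RHS]nth_default; last by rewrite (leq_trans hQs) // /n; lia.
move/eqP; rewrite addrC addr_eq0 => /eqP; rewrite coef_poly hn subn0 Fk_fn => <-.
apply: eq_bigr => j _; rewrite Fmx_fn mulrC coef_poly lift0.
have -> : (n - j.+1 = m.+1 + r - j)%N by rewrite /n addnS subSS.
by rewrite ifT //; have := ltn_ord j; lia.
Qed.

Lemma Fmx_singular_kernel :
  \det (Fmx s m.+1 m) = 0 ->
  exists2 V : {poly C}, (V != 0) && (size V <= m)%N &
    forall r, (r < m)%N -> (V * Phi K s)`_(m.+1 + r) = 0.
Proof.
move=> hdet; have /det0P [v hv0 hv] : \det (Fmx s m.+1 m)^T == 0 by rewrite det_tr hdet.
exists (rVpoly v).
  apply/andP; split; last exact: size_poly.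
  by apply: contra hv0 => /eqP h; rewrite -[v]rVpolyK h linear0.
move=> r hr; rewrite (coefM_small _ (size_poly _ _)); last by lia.
have := congr1 (fun M : 'rV_m => M 0 (Ordinal hr)) hv; rewrite !mxE => h.
rewrite -[RHS]h; apply: eq_bigr => j _.
rewrite coef_rVpoly_ord mxE Fmx_fn /= coef_poly ifT //.
by have := ltn_ord j; lia.
Qed.

Lemma Fmx_nonsingular (P Q B W : {poly C}) (g : C) :
  P`_0 != 0 -> g != 0 -> (size P <= m.+1)%N -> (size Q <= m.+2)%N ->
  (size B <= m.+2)%N -> (size W <= 3)%N ->
  congX K (P * Phi K s) Q -> Q * B - W * P ^+ 2 = g *: 'X^(2 * m + 2) ->
  \det (Fmx s m.+1 m) != 0.
Proof.
move=> hP0 hg hPs hQs hBs hWs hPF hid.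
apply/eqP => /Fmx_singular_kernel [V /andP[hV0 hVs] hVF]; move/negP: hV0; apply.
have hPF' : congX (2 * m + 1) (P * Phi K s) Q by apply: (congX_le _ hPF); lia.
by rewrite (pade_kernel_trivial hPF' hP0 hg hPs hQs hBs hWs hid hVs hVF).
Qed.

Lemma det_Fimx (q : 'I_m -> C) (i : 'I_m) :
  (forall r : 'I_m, \sum_(j < m) Fmx s m.+1 m r j * q j = - Fk s (m.+1 + r.+1)%:Z) ->
  \det (Fimx s m.+1 i) = \det (Fmx s m.+1 m) * q i.
Proof.
move=> hsys; rewrite -(cramer i hsys); congr (\det _).
by apply/matrixP => r j; rewrite !mxE.
Qed.

End PadeSystem.

Theorem theorem2 (C : numClosedFieldType) (m : nat) (a b c d : C)
    (T U : {poly C}) (x y : 'I_m -> C) :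
  size T = (2 * m + 2).+1 ->
  (size U <= 2 * m + 1)%N ->
  T ^+ 2 - Hpoly a b c d * U ^+ 2 = 1 ->
  (a - c) * (a - d) * \prod_(j < m) (a - x j) ^+ 2 != 0 ->
  (c - a) * (c - b) * \prod_(j < m) (c - y j) ^+ 2 != 0 ->
  T = 1 - (2 / ((a - c) * (a - d) * \prod_(j < m) (a - x j) ^+ 2)) *:
            (('X - c%:P) * ('X - d%:P) * \prod_(j < m) ('X - (x j)%:P) ^+ 2) ->
  T = -1 + (2 / ((c - a) * (c - b) * \prod_(j < m) (c - y j) ^+ 2)) *:
            (('X - a%:P) * ('X - b%:P) * \prod_(j < m) ('X - (y j)%:P) ^+ 2) ->
  let s := sk a b c d in
  \det (Fmx s m.+1 m) != 0 /\
  (\det (Fmx s m.+1 m))%:P * 'X^m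
    + \sum_(i < m) (\det (Fimx s m.+1 i))%:P * 'X^(m - i.+1)
  = (\det (Fmx s m.+1 m)) *: \prod_(j < m) ('X - (x j)%:P).
Proof.
move=> _ _ _ _ hc hT1 hT2 s; set K := (2 * m + 2)%N.
set P := prod_lin x; set Y := prod_lin y.
have hbe : 2 / ((c - a) * (c - b) * \prod_(j < m) (c - y j) ^+ 2) != 0.
  by rewrite mulf_neq0 ?invr_eq0 // pnatr_eq0.
have := reversed_identity hbe (etrans (esym hT1) hT2); rewrite -/P -/Y.
set g := 2 / _ => hid; have hg : g != 0 by rewrite mulf_neq0 ?invr_eq0 // pnatr_eq0.
have hP0 : P`_0 = 1 by apply: prod_lin0.
have hPF : congX K (P * Phi K s) (lin a * Y).
  apply: pade_congruence; rewrite ?prod_lin0 //.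
  by rewrite /congX hid -mul_polyC dvdp_mull.
have hsys := pade_system (leqnn K) hP0 (size_prod_lin x) (size_lin_prod_lin y a) hPF.
split.
  apply: (Fmx_nonsingular (leqnn K) (B := lin b * Y) (W := lin c * lin d) _ hg
            (size_prod_lin x) (size_lin_prod_lin y a) (size_lin_prod_lin y b) _ hPF).
  - by rewrite hP0 oner_eq0.
  - rewrite (leq_trans (size_mul_leq _ _)) //; have := size_lin c; have := size_lin d.
    by set u := size (lin c); set v := size (lin d); lia.
  - by rewrite -hid -/P -/Y; ring.
(* Step 5: Cramer's rule and reading the coefficients of P backwards. *)
under eq_bigr do rewrite (det_Fimx _ hsys) polyCM -mulrA.
rewrite (prod_XsubC_rev x) -/P big_ord_recl hP0 subn0 polyC1 mul1r -mul_polyC mulrDr.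
by rewrite mulr_sumr; under [in RHS]eq_bigr do rewrite lift0.
Qed.
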